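(* Let $\mathbb{K}=(G,M,I)$ be a finite formal context and let $S\subseteq\mathfrak{B}(\mathbb{K})$ be a set of formal concepts. Then $I_S=\bigcup_{(A,B)\in\mathfrak{B}(\mathbb{K})\setminus S}A\times B$, $G_S=\bigcup_{(A,B)\in\mathfrak{B}(\mathbb{K})\setminus S}A$, and $M_S=\bigcup_{(A,B)\in\mathfrak{B}(\mathbb{K})\setminus S}B$.
   Context: A formal context $(G,M,I)$ consists of sets $G$ (objects), $M$ (attributes) and $I\subseteq G\times M$. For $A\subseteq G$ let $A'=\{m\in M\mid (g,m)\in I\ \forall g\in A\}$ and for $B\subseteq M$ let $B'=\{g\in G\mid (g,m)\in I\ \forall m\in B\}$. A formal concept is a pair $(A,B)$ with $A'=B$, $B'=A$; $\mathfrak{B}(\mathbb{K})$ is the set of all formal concepts. For $S\subseteq\mathfrak{B}(\mathbb{K})$ the $S$-removed incidences, objects and attributes are $I_S=I\setminus\big(\bigcup_{(A,B)\in S}A\times B\setminus\bigcup_{(A,B)\in\mathfrak{B}(\mathbb{K})\setminus S}A\times B\big)$, $G_S=G\setminus\big(\bigcup_{(A,B)\in S}A\setminus\bigcup_{(A,B)\in\mathfrak{B}(\mathbb{K})\setminus S}A\big)$, $M_S=M\setminus\big(\bigcup_{(A,B)\in S}B\setminus\bigcup_{(A,B)\in\mathfrak{B}(\mathbb{K})\setminus S}B\big)$. *)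

From mathcomp Require Import all_boot.
Set Implicit Arguments. Unset Strict Implicit. Unset Printing Implicit Defensive.

Section FCA.
Variables (G M : finType) (I : G -> M -> bool).

Definition derG (A : {set G}) : {set M} := [set m | [forall g in A, I g m]].
Definition derM (B : {set M}) : {set G} := [set g | [forall m in B, I g m]].

Definition incidence : {set G * M} := [set gm | I gm.1 gm.2].

Definition is_concept (c : {set G} * {set M}) : bool :=
  (derG c.1 == c.2) && (derM c.2 == c.1).
Definition concepts : {set {set G} * {set M}} := [set c | is_concept c].

Definition unionI (T : {set {set G} * {set M}}) : {set G * M} :=
  \bigcup_(c in T) setX c.1 c.2.
Definition unionG (T : {set {set G} * {set M}}) : {set G} :=
  \bigcup_(c in T) c.1.
Definition unionM (T : {set {set G} * {set M}}) : {set M} :=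
  \bigcup_(c in T) c.2.

Definition I_S (S : {set {set G} * {set M}}) : {set G * M} :=
  incidence :\: (unionI S :\: unionI (concepts :\: S)).
Definition G_S (S : {set {set G} * {set M}}) : {set G} :=
  [set: G] :\: (unionG S :\: unionG (concepts :\: S)).
Definition M_S (S : {set {set G} * {set M}}) : {set M} :=
  [set: M] :\: (unionM S :\: unionM (concepts :\: S)).
End FCA.

(* Every incidence (g, m) lies in the object concept of g, and every object
   (attribute) lies in its object (attribute) concept; hence I, G and M are
   the unions of the extent-intent products, extents and intents over all
   concepts.  If U is the union of a family indexed by C and Y is the union
   over C \ S, then U \ (X \ Y) = Y for the union X over S, because any point
   of U outside Y is already covered by X. *)
From mathcomp Require Import all_boot.

Set Implicit Arguments.
Unset Strict Implicit.
Unset Printing Implicit Defensive.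

Lemma setD_bigcup_removed (K T : finType) (F : K -> {set T}) (C S : {set K})
    (U : {set T}) :
  U = \bigcup_(k in C) F k ->
  U :\: (\bigcup_(k in S) F k :\: \bigcup_(k in C :\: S) F k)
    = \bigcup_(k in C :\: S) F k.
Proof.
move=> ->; apply/setP=> x; rewrite !inE.
case: (boolP (x \in \bigcup_(k in C :\: S) F k)) => [xY | xNY] /=.
  by case/bigcupP: xY => k; rewrite inE => /andP[_ kC] xFk; apply/bigcupP; exists k.
apply/negbTE/andP => -[xNS /bigcupP[k kC xFk]].
case kS: (k \in S); first by case/negP: xNS; apply/bigcupP; exists k.
by case/negP: xNY; apply/bigcupP; exists k; rewrite // inE kS.
Qed.

Section Derivation.
Variables (G M : finType) (I : G -> M -> bool).

Lemma derG_subset (A A' : {set G}) : A \subset A' -> derG I A' \subset derG I A.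
Proof.
move=> sAA'; apply/subsetP=> m; rewrite !inE => /forall_inP IA'm.
by apply/forall_inP=> g gA; apply/IA'm/(subsetP sAA').
Qed.

Lemma subset_derMG (A : {set G}) : A \subset derM I (derG I A).
Proof.
apply/subsetP=> g gA; rewrite inE; apply/forall_inP=> m.
by rewrite inE => /forall_inP; apply.
Qed.

Lemma subset_derGM (B : {set M}) : B \subset derG I (derM I B).
Proof.
apply/subsetP=> m mB; rewrite inE; apply/forall_inP=> g.
by rewrite inE => /forall_inP; apply.
Qed.

Lemma derGMG (A : {set G}) : derG I (derM I (derG I A)) = derG I A.
Proof. by apply/eqP; rewrite eqEsubset subset_derGM derG_subset ?subset_derMG. Qed.

Lemma derG1 (g : G) : derG I [set g] = [set m | I g m].
Proof.
apply/setP=> m; rewrite !inE; apply/forall_inP/idP => [|Igm x /set1P -> //].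
by apply; rewrite inE.
Qed.

End Derivation.

Section Concepts.
Variables (G M : finType) (I : G -> M -> bool).

Lemma derMGM (B : {set M}) : derM I (derG I (derM I B)) = derM I B.
Proof. (* [derM I] is [derG] of the transposed context. *)
exact: (derGMG (fun m g => I g m)).
Qed.

Definition object_concept (g : G) : {set G} * {set M} :=
  (derM I (derG I [set g]), derG I [set g]).

Definition attribute_concept (m : M) : {set G} * {set M} :=
  (derM I [set m], derG I (derM I [set m])).

Lemma object_concept_in (g : G) : object_concept g \in concepts I.
Proof. by rewrite inE /is_concept /= derGMG !eqxx. Qed.

Lemma attribute_concept_in (m : M) : attribute_concept m \in concepts I.
Proof. by rewrite inE /is_concept /= derMGM !eqxx. Qed.

Lemma mem_object_concept_extent (g : G) : g \in (object_concept g).1.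
Proof. by apply: (subsetP (subset_derMG I _)); rewrite inE. Qed.

Lemma mem_attribute_concept_intent (m : M) : m \in (attribute_concept m).2.
Proof. by apply: (subsetP (subset_derGM I _)); rewrite inE. Qed.

Lemma concept_incidence (c : {set G} * {set M}) :
  c \in concepts I -> setX c.1 c.2 \subset incidence I.
Proof.
rewrite inE => /andP[/eqP <- _]; apply/subsetP=> -[g m].
by rewrite !inE /= => /andP[gA /forall_inP]; apply.
Qed.

Lemma unionI_concepts : unionI (concepts I) = incidence I.
Proof.
apply/eqP; rewrite eqEsubset; apply/andP; split.
  by apply/bigcupsP => c /concept_incidence.
apply/subsetP=> -[g m]; rewrite inE /= => Igm.
apply/bigcupP; exists (object_concept g); first exact: object_concept_in.
by rewrite in_setX mem_object_concept_extent /= derG1 inE.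
Qed.

Lemma unionG_concepts : unionG (concepts I) = [set: G].
Proof.
apply/setP=> g; rewrite inE; apply/bigcupP; exists (object_concept g).
  exact: object_concept_in.
exact: mem_object_concept_extent.
Qed.

Lemma unionM_concepts : unionM (concepts I) = [set: M].
Proof.
apply/setP=> m; rewrite inE; apply/bigcupP; exists (attribute_concept m).
  exact: attribute_concept_in.
exact: mem_attribute_concept_intent.
Qed.

End Concepts.

Theorem lemma1 (G M : finType) (I : G -> M -> bool)
  (S : {set {set G} * {set M}}) (HS : S \subset concepts I) :
  [/\ I_S I S = unionI (concepts I :\: S),
      G_S I S = unionG (concepts I :\: S) &
      M_S I S = unionM (concepts I :\: S)].
Proof.
split; apply: setD_bigcup_removed.
- by rewrite -(unionI_concepts I).
- by rewrite -(unionG_concepts I).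
- by rewrite -(unionM_concepts I).
Qed.
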